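(* Let $\mathcal{B}=\{l\le l_0\}$ be a regular spherically symmetric ball of initial data (no asymptotic assumption) on which the dominant energy condition $\mu\ge|j|$ holds. If on the boundary sphere $\partial\mathcal{B}=\{l=l_0\}$ one has $\theta^->0$ and $\theta^+>0$, then the Misner–Sharp energy of the boundary is non-negative: $\mathcal{E}(l_0)\ge 0$.
   Context: Regular spherically symmetric data: metric $h=dl^2+r(l)^2(d\theta^2+\sin^2\theta\,d\phi^2)$ on the ball with $r$ smooth, $r(0)=0$, $r'(0)=1$; second fundamental form $K_{ij}=n_in_jK_l+(h_{ij}-n_in_j)K_r$ with $n=\partial_l$; constraints $K_r(K_r+2K_l)-\frac1{r^2}(r'^2+2rr''-1)=8\pi\mu$ and $K_r'+\frac{r'}{r}(K_r-K_l)=4\pi j$. Null expansions $\theta^\pm=\frac2r(r'\pm K_r r)$. Misner–Sharp energy $\mathcal{E}(l)=\frac{r}{2}\bigl(1-\frac{r^2}{4}\theta^+\theta^-\bigr)$. *)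

From Stdlib Require Import Reals.
Open Scope R_scope.

Definition theta_plus (r dr Kr : R -> R) (l : R) : R := 2 / r l * (dr l + Kr l * r l).
Definition theta_minus (r dr Kr : R -> R) (l : R) : R := 2 / r l * (dr l - Kr l * r l).

Definition misner_sharp (r dr Kr : R -> R) (l : R) : R :=
  r l / 2 * (1 - (r l)^2 / 4 * theta_plus r dr Kr l * theta_minus r dr Kr l).

(* Smoothness is encoded as: r is C^2
   (r', r'' exist, r'' continuous), K_r is C^1, K_l is continuous; these
   are required on all of R (any smooth data on [0,l0] extends). *)
Record regular_ss_data (l0 : R) (r dr ddr Kl Kr dKr mu j : R -> R) : Prop := {
  rd_l0 : 0 < l0;
  rd_dr : forall l, derivable_pt_lim r l (dr l);
  rd_ddr : forall l, derivable_pt_lim dr l (ddr l);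
  rd_ddr_cont : forall l, continuity_pt ddr l;
  rd_dKr : forall l, derivable_pt_lim Kr l (dKr l);
  rd_dKr_cont : forall l, continuity_pt dKr l;
  rd_Kl_cont : forall l, continuity_pt Kl l;
  rd_r0 : r 0 = 0;
  rd_dr0 : dr 0 = 1;
  rd_Kreg0 : Kl 0 = Kr 0;
  rd_rpos : forall l, 0 < l <= l0 -> 0 < r l;
  rd_ham : forall l, 0 < l <= l0 ->
    Kr l * (Kr l + 2 * Kl l) - / (r l)^2 * ((dr l)^2 + 2 * r l * ddr l - 1)
      = 8 * PI * mu l;
  rd_mom : forall l, 0 < l <= l0 ->
    dKr l + dr l / r l * (Kr l - Kl l) = 4 * PI * j l
}.

(** Write [G = r (1 - r'^2 + (K_r r)^2)], so that [E = G / 2] wherever [r <> 0].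
    Using both constraints, [G' = 8 pi r^2 (mu r' + j K_r r)], which is
    non-negative wherever the dominant energy condition holds and both null
    expansions are positive, i.e. wherever [r' > |K_r r|].  Let [c] be the last
    point of [[0, l0]] at which [r' - |K_r r|] vanishes, or [c = 0] if there is
    none.  Then [G] is non-decreasing on [[c, l0]], and [G(c) >= 0]: either
    [c = 0] and [r(c) = 0], or [r'^2 = (K_r r)^2] at [c] and [G(c) = r(c)]. *)

From Stdlib Require Import Reals Lra Psatz Classical.
Open Scope R_scope.

Lemma Rle_of_derivative_nonneg (f f' : R -> R) (a b : R) :
  a <= b ->
  (forall x, a <= x <= b -> derivable_pt_lim f x (f' x)) ->
  (forall x, a < x < b -> 0 <= f' x) ->
  f a <= f b.
Proof.
intros Hab Hder Hpos.
destruct (Req_dec a b) as [<- | Hne]; [lra |].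
destruct (MVT_cor2 f f' a b) as [c [Hc Hcab]]; [lra | exact Hder |].
assert (0 <= f' c) by (apply Hpos; lra).
nra.
Qed.

Lemma continuity_pt_pos_locally (f : R -> R) (x : R) :
  continuity_pt f x -> 0 < f x ->
  exists d, 0 < d /\ forall y, Rabs (y - x) < d -> 0 < f y.
Proof.
intros Hc Hfx.
destruct (Hc (f x) Hfx) as [d [Hd Hnear]].
exists d; split; [exact Hd |].
intros y Hy; destruct (Req_dec y x) as [-> | Hne]; [exact Hfx |].
assert (Hdist : Rabs (f y - f x) < f x)
  by (apply Hnear; split; [split; [exact I | auto] | exact Hy]).
apply Rabs_def2 in Hdist; lra.
Qed.

Lemma last_zero_before_pos (f : R -> R) (a b : R) :
  a < b ->
  (forall x, a <= x <= b -> continuity_pt f x) ->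
  0 < f b ->
  exists c, a <= c < b /\ (c = a \/ f c = 0) /\
            forall x, c < x <= b -> 0 < f x.
Proof.
intros Hab Hcont Hfb.
set (S := fun x => a <= x <= b /\ f x <= 0).
assert (Hbeyond : forall c, a <= c -> (forall x, S x -> x <= c) ->
                  forall x, c < x <= b -> 0 < f x).
{ intros c Hac Hub x Hx; destruct (Rlt_or_le 0 (f x)) as [| Hfx]; [assumption |].
  assert (x <= c) by (apply Hub; split; [lra | exact Hfx]); lra. }
destruct (classic (exists x, S x)) as [HS | HS].
- assert (Hbound : bound S) by (exists b; intros x [Hx _]; lra).
  destruct (completeness S Hbound HS) as [c [Hub Hlub]].
  destruct HS as [x0 Hx0].
  assert (Hac : a <= c) by (pose proof (Hub x0 Hx0); destruct Hx0; lra).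
  assert (Hcb : c <= b) by (apply Hlub; intros x [Hx _]; lra).
  assert (Hfc_le : f c <= 0).
  { destruct (Rlt_or_le 0 (f c)) as [Hpos | ]; [exfalso | assumption].
    destruct (continuity_pt_pos_locally f c (Hcont c ltac:(lra)) Hpos) as [d [Hd Hnear]].
    assert (c <= c - d); [| lra].
    apply Hlub; intros x [Hx Hfx].
    destruct (Rle_or_lt x (c - d)) as [| Hlt]; [assumption |].
    assert (x <= c) by (apply Hub; split; assumption).
    assert (0 < f x) by (apply Hnear; rewrite Rabs_left1; lra); lra. }
  assert (Hcb' : c < b) by (destruct (Req_dec c b) as [-> |]; lra).
  assert (Hfc_ge : 0 <= f c).
  { destruct (Rlt_or_le (f c) 0) as [Hneg | ]; [exfalso | assumption].
    destruct (continuity_pt_pos_locally (fun x => - f x) c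
                (continuity_pt_opp _ _ (Hcont c ltac:(lra))) ltac:(lra))
      as [d [Hd Hnear]].
    set (y := Rmin (c + d / 2) b).
    assert (Hy : c < y <= c + d / 2 /\ y <= b).
    { split; [split; [apply Rmin_glb_lt; lra | apply Rmin_l] | apply Rmin_r]. }
    assert (0 < - f y) by (apply Hnear; rewrite Rabs_right; lra).
    assert (y <= c) by (apply Hub; split; lra); lra. }
  exists c; split; [lra | split; [right; lra |]].
  exact (Hbeyond c Hac Hub).
- exists a; split; [lra | split; [now left |]].
  apply (Hbeyond a); [lra |].
  intros y Hy; exfalso; apply HS; now exists y.
Qed.

Definition twice_misner_sharp (r dr Kr : R -> R) (l : R) : R :=
  r l * (1 - dr l ^ 2 + (Kr l * r l) ^ 2).

Lemma misner_sharp_twice (r dr Kr : R -> R) (l : R) :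
  r l <> 0 -> misner_sharp r dr Kr l = twice_misner_sharp r dr Kr l / 2.
Proof.
intros Hr; unfold misner_sharp, twice_misner_sharp, theta_plus, theta_minus.
field; exact Hr.
Qed.

(** [expansion_margin = (r / 2) min(theta^+, theta^-)]. *)
Definition expansion_margin (r dr Kr : R -> R) (l : R) : R :=
  dr l - Rabs (Kr l * r l).

Lemma twice_misner_sharp_margin0 (r dr Kr : R -> R) (l : R) :
  expansion_margin r dr Kr l = 0 -> twice_misner_sharp r dr Kr l = r l.
Proof.
unfold expansion_margin, twice_misner_sharp; intros Hgap.
replace (dr l) with (Rabs (Kr l * r l)) by lra.
rewrite <- !Rsqr_pow2, <- Rsqr_abs; ring.
Qed.

Lemma expansion_margin_pos (r dr Kr : R -> R) (l : R) :
  0 < r l -> theta_plus r dr Kr l > 0 -> theta_minus r dr Kr l > 0 ->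
  0 < expansion_margin r dr Kr l.
Proof.
unfold expansion_margin, theta_plus, theta_minus; intros Hr Hp Hm.
cut (Rabs (Kr l * r l) < dr l); [lra |].
assert (Hc : 0 < 2 / r l) by (apply Rdiv_lt_0_compat; lra).
apply Rabs_def1; nra.
Qed.

Section RegularData.

Variables (l0 : R) (r dr ddr Kl Kr dKr mu j : R -> R).
Hypothesis data : regular_ss_data l0 r dr ddr Kl Kr dKr mu j.

Definition twice_misner_sharp_deriv (l : R) : R :=
  dr l - dr l ^ 3 + 3 * dr l * Kr l ^ 2 * r l ^ 2 - 2 * r l * dr l * ddr l
  + 2 * Kr l * dKr l * r l ^ 3.

Lemma twice_misner_sharp_derivable (l : R) :
  derivable_pt_lim (twice_misner_sharp r dr Kr) l (twice_misner_sharp_deriv l).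
Proof.
destruct data as [_ Hr Hdr _ HKr _ _ _ _ _ _ _ _].
assert (Hsq : forall f df, derivable_pt_lim f l df ->
              derivable_pt_lim (fun x => f x ^ 2) l (2 * f l * df)).
{ intros f df Hf.
  apply (derivable_pt_lim_ext (fun x => f x * f x)); [intro; ring |].
  replace (2 * f l * df) with (df * f l + f l * df) by ring.
  now apply derivable_pt_lim_mult. }
unfold twice_misner_sharp, twice_misner_sharp_deriv.
replace (dr l - dr l ^ 3 + 3 * dr l * Kr l ^ 2 * r l ^ 2 - 2 * r l * dr l * ddr l
         + 2 * Kr l * dKr l * r l ^ 3)
  with (dr l * (1 - dr l ^ 2 + (Kr l * r l) ^ 2)
        + r l * (0 - 2 * dr l * ddr l
                 + 2 * (Kr l * r l) * (dKr l * r l + Kr l * dr l))) by ring.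
apply (derivable_pt_lim_mult r (fun x => 1 - dr x ^ 2 + (Kr x * r x) ^ 2));
  [apply Hr |].
apply (derivable_pt_lim_plus (fun x => 1 - dr x ^ 2) (fun x => (Kr x * r x) ^ 2)).
- apply (derivable_pt_lim_minus (fun _ => 1) (fun x => dr x ^ 2)).
  + apply derivable_pt_lim_const.
  + apply Hsq, Hdr.
- apply (Hsq (fun x => Kr x * r x)), (derivable_pt_lim_mult Kr r); [apply HKr | apply Hr].
Qed.

Lemma twice_misner_sharp_deriv_constraints (l : R) : 0 < l <= l0 ->
  twice_misner_sharp_deriv l = 8 * PI * r l ^ 2 * (mu l * dr l + j l * (Kr l * r l)).
Proof.
intros Hl.
destruct data as [_ _ _ _ _ _ _ _ _ _ Hrpos Hham Hmom].
assert (Hr := Hrpos l Hl).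
replace (8 * PI * r l ^ 2 * (mu l * dr l + j l * (Kr l * r l)))
  with (r l ^ 2 * dr l * (8 * PI * mu l) + 2 * Kr l * r l ^ 3 * (4 * PI * j l))
  by ring.
rewrite <- (Hham l Hl), <- (Hmom l Hl).
unfold twice_misner_sharp_deriv; field; lra.
Qed.

Lemma twice_misner_sharp_deriv_nonneg (l : R) : 0 < l <= l0 ->
  Rabs (j l) <= mu l -> 0 < expansion_margin r dr Kr l ->
  0 <= twice_misner_sharp_deriv l.
Proof.
unfold expansion_margin; intros Hl Hdec Hgap.
rewrite (twice_misner_sharp_deriv_constraints l Hl).
assert (Hflux : 0 <= mu l * dr l + j l * (Kr l * r l)).
{ assert (Habs : Rabs (j l * (Kr l * r l)) <= mu l * dr l).
  { rewrite Rabs_mult; apply Rmult_le_compat; auto using Rabs_pos; lra. }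
  pose proof (Rle_abs (- (j l * (Kr l * r l)))) as Hle.
  rewrite Rabs_Ropp in Hle; lra. }
assert (0 < PI) by exact PI_RGT_0.
apply Rmult_le_pos; [| exact Hflux].
assert (0 <= r l ^ 2) by (rewrite <- Rsqr_pow2; apply Rle_0_sqr).
nra.
Qed.

Lemma expansion_margin_continuous (l : R) :
  continuity_pt (expansion_margin r dr Kr) l.
Proof.
destruct data as [_ Hr Hdr _ HKr _ _ _ _ _ _ _ _].
assert (Hcont : forall f df, (forall x, derivable_pt_lim f x (df x)) ->
                continuity_pt f l)
  by (intros f df Hf; apply derivable_continuous_pt; exists (df l); apply Hf).
apply (continuity_pt_minus dr (fun x => Rabs (Kr x * r x))); [now apply (Hcont _ ddr) |].
apply (continuity_pt_comp (fun x => Kr x * r x) Rabs); [| apply Rcontinuity_abs].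
apply continuity_pt_mult; [apply (Hcont _ dKr) | apply (Hcont _ dr)]; assumption.
Qed.

End RegularData.

Theorem mainTheorem2 (l0 : R) (r dr ddr Kl Kr dKr mu j : R -> R) :
  regular_ss_data l0 r dr ddr Kl Kr dKr mu j ->
  (forall l, 0 < l <= l0 -> Rabs (j l) <= mu l) ->
  theta_minus r dr Kr l0 > 0 ->
  theta_plus r dr Kr l0 > 0 ->
  misner_sharp r dr Kr l0 >= 0.
Proof.
intros data Hdec Hminus Hplus.
pose proof data as [Hl0 _ _ _ _ _ _ Hr0 _ _ Hrpos _ _].
assert (Hrl0 : 0 < r l0) by (apply Hrpos; lra).
destruct (last_zero_before_pos (expansion_margin r dr Kr) 0 l0 Hl0)
  as [c [Hc [Hzero Hmargin]]].
- intros x _; exact (expansion_margin_continuous l0 r dr ddr Kl Kr dKr mu j data x).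
- now apply expansion_margin_pos.
- assert (HGc : 0 <= twice_misner_sharp r dr Kr c).
  { destruct Hzero as [-> | Hzero].
    - unfold twice_misner_sharp; rewrite Hr0; lra.
    - rewrite twice_misner_sharp_margin0 by exact Hzero.
      destruct (Req_dec c 0) as [-> | ]; [lra |].
      left; apply Hrpos; lra. }
  assert (Hmono : twice_misner_sharp r dr Kr c <= twice_misner_sharp r dr Kr l0).
  { apply (Rle_of_derivative_nonneg _ (twice_misner_sharp_deriv r dr ddr Kr dKr));
      [lra | intros; now apply (twice_misner_sharp_derivable l0 _ _ _ Kl _ _ mu j) |].
    intros x Hx.
    apply (twice_misner_sharp_deriv_nonneg l0 _ _ _ Kl _ _ mu j data x);
      [lra | apply Hdec; lra | apply Hmargin; lra]. }
  rewrite misner_sharp_twice by lra.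
  lra.
Qed.
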